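(* Let $k$ be a field and let $M$ be the commutative monoid generated by elements $r_1,\ldots,r_{n_1},s_1,\ldots,s_{n_2}$ subject to the single relation $\sum_{i=1}^{n_1}r_i=\sum_{j=1}^{n_2}s_j$. Then any small $\mathbb{Q}$-factorialization of the affine toric variety $W=\mathrm{Spec}(k[M])$ is a log resolution.
   Context: Small $\mathbb{Q}$-factorializations of the toric variety $W$ are understood as toric ones, i.e. the toric varieties given by simplicial subdivisions of the cone of $W$ that introduce no new rays; a log resolution here means the variety is smooth (so its torus-invariant boundary is snc). *)

From HB Require Import structures.
From mathcomp Require Import all_boot all_order all_algebra.
Set Implicit Arguments. Unset Strict Implicit. Unset Printing Implicit Defensive.
Import Order.TTheory GRing.Theory Num.Theory.
Local Open Scope ring_scope.

(* M = < r_1..r_n1, s_1..s_n2 | sum r_i = sum s_j >.  Its group is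
   Z^(n1+n2) / Z v with v = (1,..,1,-1,..,-1); the generator r_i (resp. s_j)
   is the image of the basis vector of index lshift n2 i (resp. rshift n1 j).
   The dual lattice N is v^perp inside Z^(n1+n2), with the standard pairing. *)

Section Toric.
Variables n1 n2 : nat.
Local Notation n := (n1 + n2)%N.

Definition genM (g : 'I_n1 + 'I_n2) : 'I_n :=
  match g with inl i => lshift n2 i | inr j => rshift n1 j end.

Definition relv : 'rV[int]_n :=
  \row_k (if (k < n1)%N then 1 else -1).

Definition pairing (R : pzRingType) (u w : 'rV[R]_n) : R := \sum_k u 0 k * w 0 k.

Definition inN (u : 'rV[int]_n) : Prop := pairing u relv = 0.

Definition inNR (R : realFieldType) (u : 'rV[R]_n) : Prop :=
  pairing u (map_mx intr relv) = 0.

(* the cone sigma of W = Spec k[M]: the dual of the cone spanned by M *)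
Definition coneW (R : realFieldType) (u : 'rV[R]_n) : Prop :=
  inNR u /\ forall g : 'I_n1 + 'I_n2, 0 <= u 0 (genM g).

(* primitive generators of the rays of sigma: e_i + f_j *)
Definition rayGen (p : 'I_n1 * 'I_n2) : 'rV[int]_n :=
  \row_k ((k == lshift n2 p.1) + (k == rshift n1 p.2))%:Z.

Definition rayGenR (R : realFieldType) (p : 'I_n1 * 'I_n2) : 'rV[R]_n :=
  map_mx intr (rayGen p).

Definition inCone (R : realFieldType) (S : {set 'I_n1 * 'I_n2}) (u : 'rV[R]_n) :=
  exists c : 'I_n1 * 'I_n2 -> R,
    (forall p, 0 <= c p) /\ (forall p, p \notin S -> c p = 0) /\
    u = \sum_p c p *: rayGenR R p.

Definition simplicialCone (R : realFieldType) (S : {set 'I_n1 * 'I_n2}) :=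
  forall c : 'I_n1 * 'I_n2 -> R, (forall p, p \notin S -> c p = 0) ->
    \sum_p c p *: rayGenR R p = 0 -> forall p, c p = 0.

(* a small Q-factorialization of W: a simplicial fan subdividing sigma
   whose rays are rays of sigma (given by the list of its cones) *)
Definition smallQfactorialization (R : realFieldType)
    (F : seq {set 'I_n1 * 'I_n2}) : Prop :=
  [/\ (forall S, S \in F -> simplicialCone R S),
      (forall S T, S \in F -> T \in F -> forall u : 'rV[R]_n,
          (inCone S u /\ inCone T u) <-> inCone (S :&: T) u)
    & (forall u : 'rV[R]_n, coneW u <-> exists2 S, S \in F & inCone S u)].

Definition NBasis (d : nat) (b : 'I_d -> 'rV[int]_n) : Prop :=
  [/\ forall k, inN (b k),
      (forall w, inN w -> exists z : 'I_d -> int, w = \sum_k z k *: b k)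
    & (forall z z' : 'I_d -> int,
         \sum_k z k *: b k = \sum_k z' k *: b k -> forall k, z k = z' k)].

Definition smoothCone (S : {set 'I_n1 * 'I_n2}) : Prop :=
  exists d (b : 'I_d -> 'rV[int]_n),
    NBasis b /\ forall p, p \in S -> exists k, b k = rayGen p.

(* a toric variety given by a fan is a log resolution iff it is smooth *)
Definition smoothFan (F : seq {set 'I_n1 * 'I_n2}) : Prop :=
  forall S, S \in F -> smoothCone S.

End Toric.

(* With sigma the sign vector of the relation, N = { y | sum_k sigma_k y_k = 0 } and the
   ray generator e_i + f_j is the signed root sigma_a e_a - sigma_b e_b of the edge ab = ij
   of the complete bipartite graph.  A cone of the fan is simplicial iff its roots are
   linearly independent, and smooth iff they extend to a Z-basis of N.  So it suffices that
   every free family of signed roots with endpoints in W extends to a Z-basis of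
   N_W = { y in N | supp y <= W }.  Induct on |W| and pick distinct v, w in W.  If no root
   meets v, add the root vw to a basis of N_(W - v); if exactly one root p meets v, add p,
   whose v-coordinate is a unit.  If two roots p and g meet v, along edges vw' and vu, then
   g -/+ p is (up to sign) the root of w'u: this transvection keeps the family free, does not
   change whether it extends to a basis, and lowers the number of roots meeting v. *)

From mathcomp Require Import all_boot all_order all_algebra.
From mathcomp Require Import ring.
Set Implicit Arguments. Unset Strict Implicit. Unset Printing Implicit Defensive.
Import Order.TTheory GRing.Theory Num.Theory.
Local Open Scope ring_scope.

Section Families.
Variables (R : nzRingType) (V : lmodType R).

Definition free_on (I : finType) (A : {set I}) (x : I -> V) : Prop :=
  forall c : I -> R, (forall i, i \notin A -> c i = 0) ->
    \sum_i c i *: x i = 0 -> forall i, c i = 0.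

Definition is_basis (P : V -> Prop) d (b : 'I_d -> V) : Prop :=
  [/\ forall k, P (b k),
      forall y, P y -> exists z : 'I_d -> R, y = \sum_k z k *: b k
    & free_on setT b].

Definition extends_to_basis (P : V -> Prop) (I : finType) (A : {set I})
    (x : I -> V) : Prop :=
  exists d (b : 'I_d -> V), is_basis P b /\ forall i, i \in A -> exists k, b k = x i.

Definition shear (I : eqType) (x : I -> V) (g p : I) (c : R) : I -> V :=
  fun i => if i == g then x g + c *: x p else x i.

Definition fam_cons d (y : V) (b : 'I_d -> V) (k : 'I_d.+1) : V :=
  if unlift ord0 k is Some k' then b k' else y.

Section FiniteIndex.
Variable I : finType.
Implicit Types (A B : {set I}) (x : I -> V).

Lemma sum_delta_scale x p t : \sum_i ((i == p)%:R * t) *: x i = t *: x p.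
Proof.
rewrite (bigD1 p) //= eqxx mul1r big1 ?addr0 // => i /negbTE ->.
by rewrite mul0r scale0r.
Qed.

Lemma sum_shear x g p c (z : I -> R) :
  \sum_i z i *: shear x g p c i = \sum_i z i *: x i + (z g * c) *: x p.
Proof.
rewrite (bigD1 g) //= [in RHS](bigD1 g) //= /shear eqxx scalerDr scalerA.
rewrite addrAC; congr (_ + _ + _); apply: eq_bigr => i /negbTE -> //.
Qed.

Lemma free_onS A B x : A \subset B -> free_on B x -> free_on A x.
Proof.
move=> /subsetP sAB fx c cA; apply: fx => i iB; apply: cA.
by apply: contra iB; apply: sAB.
Qed.

Lemma free_on_inj A x : free_on A x -> {in A &, injective x}.
Proof.
move=> fx i j iA jA eq_x; apply/eqP; apply: contraT => neq_ij.
pose c k : R := (k == i)%:R * 1 - (k == j)%:R * 1.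
suff /eqP : c i = 0 by rewrite /c eqxx (negbTE neq_ij) mul0r subr0 mulr1 oner_eq0.
apply: fx.
  move=> k kA; have [ki kj] : k != i /\ k != j.
    by split; apply: contraNneq kA => ->.
  by rewrite /c (negbTE ki) (negbTE kj) !mul0r subrr.
under eq_bigr => k _ do rewrite scalerBl.
by rewrite sumrB !sum_delta_scale eq_x subrr.
Qed.

Lemma free_on_neq0 A x i : free_on A x -> i \in A -> x i != 0.
Proof.
move=> fx iA; apply/eqP => xi0.
suff /eqP : (i == i)%:R * 1 = 0 :> R by rewrite eqxx mulr1 oner_eq0.
apply: (fx (fun k => (k == i)%:R * 1)) => [k kA|].
  by rewrite (introF eqP) ?mul0r // => ki; rewrite ki iA in kA.
by rewrite sum_delta_scale xi0 scaler0.
Qed.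

Lemma free_on_shear A x g p c :
  p \in A -> g != p -> free_on A x -> free_on A (shear x g p c).
Proof.
move=> pA neq_gp fx z zA; rewrite sum_shear -sum_delta_scale -big_split /=.
under eq_bigr => i _ do rewrite -scalerDl.
move=> /fx coef0; have {}coef0 i : z i + (i == p)%:R * (z g * c) = 0.
  apply: coef0 => j jA; rewrite zA // (introF eqP) ?mul0r ?addr0 //.
  by move=> jp; rewrite jp pA in jA.
have zg : z g = 0 by have := coef0 g; rewrite (negbTE neq_gp) mul0r addr0.
by move=> i; have := coef0 i; rewrite zg mul0r mulr0 addr0.
Qed.

End FiniteIndex.

Lemma is_basis_shear P d (b : 'I_d -> V) k l c :
  k != l -> P (b k + c *: b l) -> is_basis P b -> is_basis P (shear b k l c).
Proof.
move=> neq_kl Pkl [Pb span fb]; split.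
- by move=> i; rewrite /shear; case: eqP.
- move=> y /span [z ->]; exists (fun i => z i - (i == l)%:R * (z k * c)).
  rewrite sum_shear (negbTE neq_kl) mul0r subr0.
  under [in RHS]eq_bigr => i _ do rewrite scalerBl.
  by rewrite sumrB sum_delta_scale subrK.
- exact: free_on_shear.
Qed.

Lemma extends_to_basis_shear P (I : finType) (A : {set I}) x g p c :
  (forall y z a, P y -> P z -> P (y + a *: z)) ->
  g \in A -> p \in A -> g != p -> free_on A (shear x g p c) ->
  extends_to_basis P A (shear x g p c) -> extends_to_basis P A x.
Proof.
move=> P_lin gA pA neq_gp fx' [d [b [bB bx']]].
have inj_x' := free_on_inj fx'.
have [kg bkg] := bx' g gA; have [kp bkp] := bx' p pA.
have neq_k : kg != kp.
  by apply: contraNneq neq_gp => ek; apply/eqP/inj_x'; rewrite // -bkg -bkp ek.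
exists d, (shear b kg kp (- c)); split.
  by have [Pb _ _] := bB; apply: is_basis_shear; rewrite //; apply: P_lin.
move=> i iA; have [-> | neq_ig] := eqVneq i g.
  exists kg; rewrite {1}/shear eqxx bkg bkp /shear eqxx eq_sym (negbTE neq_gp).
  by rewrite scaleNr addrK.
have [k bk] := bx' i iA; exists k.
have neq_k' : k != kg.
  by apply: contraNneq neq_ig => ek; apply/eqP/inj_x'; rewrite // -bk -bkg ek.
by rewrite {1}/shear (negbTE neq_k') bk /shear (negbTE neq_ig).
Qed.

Lemma sum_fam_cons d (z : 'I_d.+1 -> R) y (b : 'I_d -> V) :
  \sum_k z k *: fam_cons y b k = z ord0 *: y + \sum_k z (lift ord0 k) *: b k.
Proof.
rewrite big_ord_recl /fam_cons unlift_none; congr (_ + _).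
by apply: eq_bigr => k _; rewrite liftK.
Qed.

End Families.

Section RootLattice.
Variables (n : nat) (sigma : 'I_n -> int).
Hypothesis sigma_sqr : forall k, sigma k * sigma k = 1.
Local Notation vec := 'rV[int]_n.
Implicit Types (W : {set 'I_n}) (y z : vec).

Definition sdot y : int := \sum_k y 0 k * sigma k.

Definition lattice_on W y : Prop := sdot y = 0 /\ forall k, k \notin W -> y 0 k = 0.

Definition sroot a b : vec := \row_k (sigma a * (k == a)%:R - sigma b * (k == b)%:R).

Definition is_sroot W y : Prop :=
  exists a b, [/\ a \in W, b \in W, a != b & y = sroot a b].

Lemma sigma_neq0 k : sigma k != 0.
Proof. by apply: contra_eq_neq (sigma_sqr k) => ->; rewrite mul0r. Qed.

Lemma sum_delta (f : 'I_n -> int) a : \sum_k (k == a)%:R * f k = f a.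
Proof.
rewrite (bigD1 a) //= eqxx mul1r big1 ?addr0 // => k /negbTE ->.
by rewrite mul0r.
Qed.

Lemma sdotDZ y z c : sdot (y + c *: z) = sdot y + c * sdot z.
Proof.
rewrite /sdot mulr_sumr -big_split; apply: eq_bigr => k _.
by rewrite !mxE mulrDl mulrA.
Qed.

Lemma lattice_onDZ W y z c :
  lattice_on W y -> lattice_on W z -> lattice_on W (y + c *: z).
Proof.
move=> [y0 yW] [z0 zW]; split; first by rewrite sdotDZ y0 z0 mulr0 addr0.
by move=> k kW; rewrite !mxE yW // zW // mulr0 addr0.
Qed.

Lemma lattice_onS W W' y : W \subset W' -> lattice_on W y -> lattice_on W' y.
Proof.
move=> /subsetP sWW' [y0 yW]; split => // k kW'; apply: yW.
by apply: contra kW'; apply: sWW'.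
Qed.

Lemma lattice_on_setD1 W v y : lattice_on W y -> y 0 v = 0 -> lattice_on (W :\ v) y.
Proof.
move=> [y0 yW] yv; split => // k; rewrite in_setD1 negb_and negbK.
by case/orP => [/eqP -> | /yW].
Qed.

Lemma lattice_on_le1 W y : (#|W| <= 1)%N -> lattice_on W y -> y = 0.
Proof.
move=> /card_le1_eqP W1 [y0 yW]; apply/rowP => k; rewrite mxE.
have [kW | /yW //] := boolP (k \in W).
have yk : sdot y = y 0 k * sigma k.
  rewrite /sdot (bigD1 k) //= big1 ?addr0 // => j neq_jk.
  rewrite yW ?mul0r //; apply: contra neq_jk => jW.
  by apply/eqP; apply: W1.
by apply: (mulIf (sigma_neq0 k)); rewrite mul0r -yk.
Qed.

Lemma sroot_lattice_on W a b : a \in W -> b \in W -> lattice_on W (sroot a b).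
Proof.
move=> aW bW; split.
  rewrite /sdot; under eq_bigr => k _ do rewrite mxE mulrBl -!mulrA.
  by rewrite sumrB -!mulr_sumr !sum_delta !sigma_sqr subrr.
move=> k kW; rewrite mxE !(introF eqP) ?mulr0 ?subrr // => ek.
  by rewrite ek bW in kW.
by rewrite ek aW in kW.
Qed.

Lemma sroot_entry_left a b : a != b -> sroot a b 0 a = sigma a.
Proof. by move=> neq_ab; rewrite mxE eqxx (negbTE neq_ab) mulr0 subr0 mulr1. Qed.

Lemma sroot_entry_right a b : a != b -> sroot a b 0 b = - sigma b.
Proof. by move=> neq_ab; rewrite mxE eqxx eq_sym (negbTE neq_ab) mulr0 sub0r mulr1. Qed.

Lemma sroot_entry_out a b k : k != a -> k != b -> sroot a b 0 k = 0.
Proof. by move=> /negbTE ka /negbTE kb; rewrite mxE ka kb !mulr0 subrr. Qed.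

Lemma srootC a b : sroot b a = - sroot a b.
Proof. by apply/rowP => k; rewrite !mxE opprB. Qed.

Lemma sroot_diag a : sroot a a = 0.
Proof. by apply/rowP => k; rewrite !mxE subrr. Qed.

Lemma sroot_subr v u w : sroot v u - sroot v w = sroot w u.
Proof. by apply/rowP => k; rewrite !mxE; ring. Qed.

Lemma is_sroot_lattice_on W y : is_sroot W y -> lattice_on W y.
Proof. by move=> [a [b [aW bW _ ->]]]; apply: sroot_lattice_on. Qed.

Lemma is_sroot_scale W a b e :
  a \in W -> b \in W -> a != b -> e * e = 1 -> is_sroot W (e *: sroot a b).
Proof.
move=> aW bW neq_ab /eqP; rewrite -expr2 sqrf_eq1 => /orP [] /eqP ->.
  by exists a, b; rewrite scale1r.
by exists b, a; rewrite scaleN1r -srootC eq_sym.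
Qed.

Lemma is_sroot_touching W y v : is_sroot W y -> y 0 v != 0 ->
  exists u e, [/\ u \in W, u != v, e * e = 1, y = e *: sroot v u & y 0 v = e * sigma v].
Proof.
move=> [a [b [aW bW neq_ab ->]]].
have [-> _ | neq_va] := eqVneq v a.
  by exists b, 1; rewrite scale1r mulr1 mul1r eq_sym sroot_entry_left.
have [-> _ | neq_vb] := eqVneq v b.
  by exists a, (-1); rewrite scaleN1r -srootC mulrNN mulr1 mulN1r sroot_entry_right.
by rewrite sroot_entry_out ?eqxx.
Qed.

Lemma is_sroot_entry_sqr W y v : is_sroot W y -> y 0 v != 0 -> y 0 v * y 0 v = 1.
Proof.
move=> ry /(is_sroot_touching ry) [u [e [_ _ e_sqr _ ->]]].
by rewrite mulrACA e_sqr sigma_sqr mulr1.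
Qed.

Lemma is_sroot_setD1 W y v : is_sroot W y -> y 0 v = 0 -> is_sroot (W :\ v) y.
Proof.
move=> [a [b [aW bW neq_ab ->]]] yv; exists a, b; split => //.
- rewrite in_setD1 aW andbT; apply: contra_eq_neq yv => <-.
  by rewrite sroot_entry_left ?sigma_neq0.
- rewrite in_setD1 bW andbT; apply: contra_eq_neq yv => <-.
  by rewrite sroot_entry_right ?oppr_eq0 ?sigma_neq0.
Qed.

Lemma is_basis_cons W v d (b : 'I_d -> vec) y :
  is_basis (lattice_on (W :\ v)) b -> lattice_on W y ->
  y 0 v * y 0 v = 1 -> is_basis (lattice_on W) (fam_cons y b).
Proof.
move=> [Lb span free_b] Ly y_sqr.
split.
- move=> k; rewrite /fam_cons; case: (unliftP ord0 k) => [k'|] _ //.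
  exact: lattice_onS (subsetDl W [set v]) (Lb k').
- move=> z Lz; pose c := z 0 v * y 0 v.
  have Lz' : lattice_on (W :\ v) (z + (- c) *: y).
    apply: lattice_on_setD1; first exact: lattice_onDZ.
    by rewrite !mxE /c mulNr -mulrA y_sqr mulr1 subrr.
  have [t zt] := span _ Lz'.
  exists (fun k => if unlift ord0 k is Some k' then t k' else c).
  rewrite sum_fam_cons unlift_none; under eq_bigr => k _ do rewrite liftK.
  by rewrite -zt scaleNr addrC subrK.
- move=> t _; rewrite sum_fam_cons => sum0.
  have t0 : t ord0 = 0.
    have /rowP /(_ v) := sum0; rewrite !mxE summxE big1 ?addr0 => [t_yv|k _].
      by rewrite -[t ord0]mulr1 -y_sqr mulrA t_yv mul0r.
    by rewrite mxE (Lb k).2 ?setD11 ?mulr0.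
  rewrite t0 scale0r add0r in sum0.
  move=> k; case: (unliftP ord0 k) => [k'|] -> //.
  by apply: (free_b (fun k => t (lift ord0 k))) => // i; rewrite in_setT.
Qed.

Variable I : finType.
Implicit Types (A : {set I}) (x : I -> vec).

Definition sroots_in W A x : Prop := forall i, i \in A -> is_sroot W (x i).

Definition touching A x v : {set I} := [set i in A | x i 0 v != 0].

Lemma shear_fewer_touching W A x v p g :
  p \in A -> g \in A -> g != p -> x p 0 v != 0 -> x g 0 v != 0 ->
  free_on A x -> sroots_in W A x ->
  let x' := shear x g p (- (x g 0 v * x p 0 v)) in
  [/\ free_on A x', sroots_in W A x' & #|touching A x' v| < #|touching A x v|]%N.
Proof.
move=> pA gA neq_gp xpv xgv fx rx x'.
have fx' : free_on A x' by apply: free_on_shear.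
have [w [ep [wW neq_wv ep_sqr xp xpv_e]]] := is_sroot_touching (rx p pA) xpv.
have [u [eg [uW neq_uv eg_sqr xg xgv_e]]] := is_sroot_touching (rx g gA) xgv.
have x'g : x' g = eg *: sroot w u.
  rewrite /x' /shear eqxx xgv_e xpv_e -(sroot_subr v u w) scalerBr xg xp.
  rewrite scalerA mulNr scaleNr.
  have -> : eg * sigma v * (ep * sigma v) * ep = eg * (sigma v * sigma v) * (ep * ep).
    by ring.
  by rewrite sigma_sqr ep_sqr !mulr1.
have neq_wu : w != u.
  by apply: contraNneq (free_on_neq0 fx' gA) => ew; rewrite x'g ew sroot_diag scaler0.
split => //.
  move=> i iA; have [-> | neq_ig] := eqVneq i g.
    by rewrite x'g; apply: is_sroot_scale.
  by rewrite /x' /shear (negbTE neq_ig); apply: rx.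
have sub : touching A x' v \subset touching A x v :\ g.
  apply/subsetP => i; rewrite !inE; have [-> | neq_ig] := eqVneq i g.
    by rewrite x'g mxE sroot_entry_out 1?eq_sym // mulr0 eqxx andbF.
  by rewrite /x' /shear (negbTE neq_ig).
rewrite (cardsD1 g (touching A x v)) inE gA xgv add1n ltnS.
exact: subset_leq_card.
Qed.

Section Step.
Variables (W : {set 'I_n}) (v w : 'I_n).
Hypotheses (vW : v \in W) (wW : w \in W) (neq_vw : v != w).
Hypothesis IH : forall A x, free_on A x -> sroots_in (W :\ v) A x ->
  extends_to_basis (lattice_on (W :\ v)) A x.

Lemma extends_untouched A x : (forall i, i \in A -> x i 0 v = 0) ->
  free_on A x -> sroots_in W A x -> extends_to_basis (lattice_on W) A x.
Proof.
move=> x_v0 fx rx.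
have [d [b [bB bx]]] := IH fx (fun i iA => is_sroot_setD1 (rx i iA) (x_v0 i iA)).
exists d.+1, (fam_cons (sroot v w) b); split.
  apply: is_basis_cons bB (sroot_lattice_on vW wW) _.
  by rewrite sroot_entry_left // sigma_sqr.
by move=> i /bx [k bk]; exists (lift ord0 k); rewrite /fam_cons liftK.
Qed.

Lemma extends_leaf A x p : p \in A -> x p 0 v != 0 ->
  (forall i, i \in A -> i != p -> x i 0 v = 0) ->
  free_on A x -> sroots_in W A x -> extends_to_basis (lattice_on W) A x.
Proof.
move=> pA xpv x_v0 fx rx.
have [d [b [bB bx]]] : extends_to_basis (lattice_on (W :\ v)) (A :\ p) x.
  apply: IH; first exact: free_onS (subsetDl A [set p]) fx.
  move=> i; rewrite in_setD1 => /andP [neq_ip iA].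
  exact: is_sroot_setD1 (rx i iA) (x_v0 i iA neq_ip).
exists d.+1, (fam_cons (x p) b); split.
  have rp := rx p pA.
  exact: is_basis_cons bB (is_sroot_lattice_on rp) (is_sroot_entry_sqr rp xpv).
move=> i iA; have [-> | neq_ip] := eqVneq i p.
  by exists ord0; rewrite /fam_cons unlift_none.
have [k bk] : exists k, b k = x i by apply: bx; rewrite in_setD1 neq_ip iA.
by exists (lift ord0 k); rewrite /fam_cons liftK.
Qed.

Lemma extends_to_basis_step A x :
  free_on A x -> sroots_in W A x -> extends_to_basis (lattice_on W) A x.
Proof.
have [m] := ubnP #|touching A x v|; elim: m x => // m IHm x lt_m fx rx.
have [T0 | [p]] := set_0Vmem (touching A x v).
  apply: extends_untouched => // i iA; apply/eqP; apply: contraT => xiv.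
  have : i \in touching A x v by rewrite inE iA xiv.
  by rewrite T0 inE.
rewrite inE => /andP [pA xpv].
have [Tp | [g]] := set_0Vmem (touching A x v :\ p).
  apply: (extends_leaf pA xpv) => // i iA neq_ip; apply/eqP; apply: contraT => xiv.
  have : i \in touching A x v :\ p by rewrite !inE neq_ip iA xiv.
  by rewrite Tp inE.
rewrite !inE => /and3P [neq_gp gA xgv].
have [fx' rx' lt_T] := shear_fewer_touching pA gA neq_gp xpv xgv fx rx.
apply: (extends_to_basis_shear _ gA pA neq_gp fx'); first exact: lattice_onDZ.
by apply: IHm fx' rx'; rewrite (leq_trans lt_T) // -ltnS.
Qed.

End Step.

Lemma extends_le1 W A x : (#|W| <= 1)%N -> sroots_in W A x ->
  extends_to_basis (lattice_on W) A x.
Proof.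
move=> W1 rx; exists 0%N, (fun=> 0); split.
  split; [by case | move=> y Ly | by move=> c _ _ []].
  by exists (fun=> 0); rewrite big_ord0 (lattice_on_le1 W1 Ly).
move=> i /rx [a [b [aW bW neq_ab _]]].
by move/card_le1_eqP: W1 => /(_ a b aW bW) eq_ab; rewrite eq_ab eqxx in neq_ab.
Qed.

Theorem sroots_extend_to_basis W A x :
  free_on A x -> sroots_in W A x -> extends_to_basis (lattice_on W) A x.
Proof.
have [m] := ubnP #|W|; elim: m W A x => // m IHm W A x lt_m fx rx.
have [W1 | /card_gt1P [v [w [vW wW neq_vw]]]] := leqP #|W| 1.
  exact: extends_le1.
apply: (extends_to_basis_step vW wW neq_vw) fx rx => B y; apply: IHm.
by move: lt_m; rewrite (cardsD1 v W) vW.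
Qed.

End RootLattice.

Section Toric.
Variables n1 n2 : nat.
Local Notation n := (n1 + n2)%N.

Definition relv_sign (k : 'I_n) : int := relv n1 n2 0 k.

Lemma relv_sign_sqr k : relv_sign k * relv_sign k = 1.
Proof. by rewrite /relv_sign mxE; case: ifP. Qed.

Lemma rayGen_sroot (p : 'I_n1 * 'I_n2) :
  rayGen p = sroot relv_sign (lshift n2 p.1) (rshift n1 p.2).
Proof.
apply/rowP => k; rewrite /relv_sign /relv !mxE /= ltn_ord ltnNge leq_addr /=.
by rewrite mul1r mulN1r opprK PoszD -!natz.
Qed.

Lemma rayGen_sroots (S : {set 'I_n1 * 'I_n2}) :
  sroots_in relv_sign setT S (@rayGen n1 n2).
Proof.
move=> p _; rewrite rayGen_sroot.
by exists (lshift n2 p.1), (rshift n1 p.2); rewrite !in_setT eq_lrshift.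
Qed.

Lemma free_on_rayGen (R : realFieldType) (S : {set 'I_n1 * 'I_n2}) :
  simplicialCone R S -> free_on S (@rayGen n1 n2).
Proof.
move=> simplicial z zS sum0 p; apply/eqP; rewrite -(intr_eq0 R); apply/eqP.
apply: (simplicial (fun q => (z q)%:~R)) => [q qS|]; first by rewrite zS.
rewrite /rayGenR; under eq_bigr => q _ do rewrite -map_mxZ.
by rewrite -map_mx_sum sum0 map_mx0.
Qed.

Lemma smoothCone_of_extends (S : {set 'I_n1 * 'I_n2}) :
  extends_to_basis (lattice_on relv_sign setT) S (@rayGen n1 n2) -> smoothCone S.
Proof.
move=> [d [b [[Lb span free_b] bS]]]; exists d, b; split => //; split.
- by move=> k; exact: (Lb k).1.
- by move=> y Ny; apply: span; split => // k; rewrite in_setT.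
- move=> z z' eq_z k; apply/eqP; rewrite -subr_eq0; apply/eqP.
  apply: (free_b (fun k => z k - z' k)) => [j|]; first by rewrite in_setT.
  by under eq_bigr => j _ do rewrite scalerBl; rewrite sumrB eq_z subrr.
Qed.

End Toric.

Unset Implicit Arguments.

Theorem mainTheorem11 (R : realFieldType) (n1 n2 : nat)
    (F : seq {set 'I_n1 * 'I_n2}) :
  smallQfactorialization R F -> smoothFan F.
Proof.
move=> [simplicial _ _] S SF; apply: smoothCone_of_extends.
apply: sroots_extend_to_basis; first exact: relv_sign_sqr.
  exact: free_on_rayGen (simplicial S SF).
exact: rayGen_sroots.
Qed.
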